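(* Let $(X,d)$ be a complete CAT(0) space and let $(A,B)$ be a pair of nonempty, closed, convex, bounded subsets of $X$ which is proximal. Let $T:A\cup B\to A\cup B$ be a cyclic relatively nonexpansive mapping. Then $T$ is nonexpansive, i.e., $d(Tx,Ty)\le d(x,y)$ for all $x,y\in A\cup B$.
   Context: A CAT(0) space is a geodesic space in which every geodesic triangle satisfies $d(x,y)\le d_{\mathbb{E}^2}(\bar x,\bar y)$ for all points $x,y$ of the triangle and their comparison points in a Euclidean comparison triangle with the same side lengths. $\operatorname{dist}(A,B)=\inf\{d(x,y):x\in A,y\in B\}$. The pair $(A,B)$ is proximal if for every $(a,b)\in A\times B$ there is $(a',b')\in A\times B$ with $d(a,b')=d(a',b)=\operatorname{dist}(A,B)$. $T$ is relatively nonexpansive if $d(Tx,Ty)\le d(x,y)$ for all $x\in A$, $y\in B$, and cyclic if $T(A)\subseteq B$, $T(B)\subseteq A$. *)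

From Stdlib Require Import Reals Lra.
From Coquelicot Require Import Coquelicot.
Open Scope R_scope.

Section CAT0.
Variables (X : Type) (d : X -> X -> R).

Definition m_is_metric : Prop :=
  (forall x y, 0 <= d x y) /\
  (forall x y, d x y = 0 <-> x = y) /\
  (forall x y, d x y = d y x) /\
  (forall x y z, d x z <= d x y + d y z).

Definition m_geod_seg (g : R -> X) (l : R) : Prop :=
  0 <= l /\ forall s t, 0 <= s <= l -> 0 <= t <= l -> d (g s) (g t) = Rabs (s - t).

Definition m_geodesic_from_to (g : R -> X) (x y : X) : Prop :=
  m_geod_seg g (d x y) /\ g 0 = x /\ g (d x y) = y.

Definition m_geodesic_space : Prop :=
  forall x y, exists g, m_geodesic_from_to g x y.

Definition m_distE (P Q : R * R) : R :=
  sqrt ((fst P - fst Q) ^ 2 + (snd P - snd Q) ^ 2).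

Definition m_lerp (P Q : R * R) (u : R) : R * R :=
  (fst P + u * (fst Q - fst P), snd P + u * (snd Q - snd P)).

(* x = g s is a point of the side g (of length l), and xb is its comparison
   point on the comparison side [P,Q] *)
Definition m_side_point (g : R -> X) (l : R) (P Q : R * R) (x : X) (xb : R * R) : Prop :=
  exists s, 0 <= s <= l /\ x = g s /\ xb = m_lerp P Q (s / l).

Definition m_cat0_ineq : Prop :=
  forall (p q r : X) (g1 g2 g3 : R -> X) (P Q Rr : R * R),
    m_geodesic_from_to g1 p q -> m_geodesic_from_to g2 q r -> m_geodesic_from_to g3 r p ->
    m_distE P Q = d p q -> m_distE Q Rr = d q r -> m_distE Rr P = d r p ->
    forall x xb y yb,
      (m_side_point g1 (d p q) P Q x xb \/ m_side_point g2 (d q r) Q Rr x xb \/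
       m_side_point g3 (d r p) Rr P x xb) ->
      (m_side_point g1 (d p q) P Q y yb \/ m_side_point g2 (d q r) Q Rr y yb \/
       m_side_point g3 (d r p) Rr P y yb) ->
      d x y <= m_distE xb yb.

Definition m_cauchy_seq (u : nat -> X) : Prop :=
  forall eps, 0 < eps -> exists N, forall m n, (N <= m)%nat -> (N <= n)%nat -> d (u m) (u n) < eps.

Definition m_converges_to (u : nat -> X) (x : X) : Prop :=
  forall eps, 0 < eps -> exists N, forall n, (N <= n)%nat -> d (u n) x < eps.

Definition m_complete_space : Prop :=
  forall u, m_cauchy_seq u -> exists x, m_converges_to u x.

Definition complete_CAT0 : Prop :=
  m_is_metric /\ m_geodesic_space /\ m_cat0_ineq /\ m_complete_space.

Definition m_nonempty (A : X -> Prop) : Prop := exists x, A x.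

Definition m_closed_set (A : X -> Prop) : Prop :=
  forall u x, (forall n, A (u n)) -> m_converges_to u x -> A x.

Definition m_convex_set (A : X -> Prop) : Prop :=
  forall x y g, A x -> A y -> m_geodesic_from_to g x y ->
    forall t, 0 <= t <= d x y -> A (g t).

Definition m_bounded_set (A : X -> Prop) : Prop :=
  exists M, forall x y, A x -> A y -> d x y <= M.

Definition m_dist_sets (A B : X -> Prop) : Rbar :=
  Glb_Rbar (fun r => exists a b, A a /\ B b /\ r = d a b).

Definition proximal (A B : X -> Prop) : Prop :=
  forall a b, A a -> B b ->
    exists a' b', A a' /\ B b' /\
      Finite (d a b') = m_dist_sets A B /\ Finite (d a' b) = m_dist_sets A B.

Definition m_union_set (A B : X -> Prop) : X -> Prop := fun x => A x \/ B x.

Definition cyclic_map (A B : X -> Prop) (T : X -> X) : Prop :=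
  (forall x, A x -> B (T x)) /\ (forall x, B x -> A (T x)).

Definition rel_nonexpansive (A B : X -> Prop) (T : X -> X) : Prop :=
  forall x y, A x -> B y -> d (T x) (T y) <= d x y.

End CAT0.

Arguments m_is_metric {X}. Arguments m_geod_seg {X}. Arguments m_geodesic_from_to {X}.
Arguments m_geodesic_space {X}. Arguments m_side_point {X}. Arguments m_cat0_ineq {X}.
Arguments m_cauchy_seq {X}. Arguments m_converges_to {X}. Arguments m_complete_space {X}.
Arguments complete_CAT0 {X}. Arguments m_nonempty {X}. Arguments m_closed_set {X}.
Arguments m_convex_set {X}. Arguments m_bounded_set {X}. Arguments m_dist_sets {X}.
Arguments proximal {X}. Arguments m_union_set {X}. Arguments cyclic_map {X}.
Arguments rel_nonexpansive {X}.

(* Let D = dist(A,B), attained thanks to proximality.  In a CAT(0) space the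
   angle at a nearest point of a convex set is obtuse, which gives the
   Pythagorean-type inequality  d(p,q)^2 + D^2 <= d(p,q')^2  whenever q is a
   point of the convex set S nearest to q' at distance D and p lies in S.  For
   x, y in A, choose y' in B at distance D from y.  Relative nonexpansiveness
   forces d(Ty,Ty') = D, so Ty is nearest to Ty' in B and
   d(Tx,Ty)^2 + D^2 <= d(Tx,Ty')^2 <= d(x,y')^2 <= d(x,y)^2 + D^2,
   the last step being a second comparison argument.  Both comparison
   inequalities come from the CAT(0) inequality applied to a point at small
   relative distance u from a vertex, followed by letting u tend to 0. *)

From Stdlib Require Import Reals Lra Psatz.
From Coquelicot Require Import Coquelicot.
Open Scope R_scope.

Lemma Rle_of_forall_le_plus_scaled (a b c : R) :
  (forall u, 0 < u < 1 -> a <= b + u * c) -> a <= b.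
Proof.
  intros H. apply Rnot_lt_le. intros hab.
  pose proof (Rabs_pos c) as hc0.
  set (u := (a - b) / (2 * (Rabs c + (a - b)))).
  assert (hu : u * (2 * (Rabs c + (a - b))) = a - b) by (unfold u; field; lra).
  assert (hu0 : 0 < u) by (apply Rdiv_lt_0_compat; lra).
  assert (hc : u * c <= u * Rabs c) by (apply Rmult_le_compat_l; [lra | apply Rle_abs]).
  specialize (H u ltac:(split; [lra | nra])).
  nra.
Qed.

Lemma Rle_of_sq_le (a b : R) : 0 <= b -> a ^ 2 <= b ^ 2 -> a <= b.
Proof. intros hb h. apply Rnot_lt_le. intros hba. nra. Qed.

Lemma distE_sq (P Q : R * R) : m_distE P Q ^ 2 = (fst P - fst Q) ^ 2 + (snd P - snd Q) ^ 2.
Proof. unfold m_distE. apply pow2_sqrt. apply Rplus_le_le_0_compat; apply pow2_ge_0. Qed.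

Lemma distE_eq0 (P Q : R * R) : m_distE P Q = 0 -> P = Q.
Proof.
  intros h. pose proof (distE_sq P Q) as h2. rewrite h in h2.
  destruct P as [p1 p2], Q as [q1 q2]. cbn [fst snd] in h2.
  pose proof (pow2_ge_0 (p1 - q1)). pose proof (pow2_ge_0 (p2 - q2)).
  assert (e1 : (p1 - q1) ^ 2 = 0) by lra.
  assert (e2 : (p2 - q2) ^ 2 = 0) by lra.
  f_equal; apply Rminus_diag_uniq, Rsqr_0_uniq; unfold Rsqr; [rewrite <- e1 | rewrite <- e2]; ring.
Qed.

Lemma distE_lerp_lerp (P Q Rr : R * R) (u : R) : 0 <= u ->
  m_distE (m_lerp P Q u) (m_lerp Rr P (1 - u)) = u * m_distE Q Rr.
Proof.
  intros hu. unfold m_distE, m_lerp. cbn [fst snd].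
  replace ((fst P + u * (fst Q - fst P) - (fst Rr + (1 - u) * (fst P - fst Rr))) ^ 2 +
           (snd P + u * (snd Q - snd P) - (snd Rr + (1 - u) * (snd P - snd Rr))) ^ 2)
    with (u ^ 2 * ((fst Q - fst Rr) ^ 2 + (snd Q - snd Rr) ^ 2)) by ring.
  rewrite sqrt_mult_alt by nra. rewrite sqrt_pow2 by lra. reflexivity.
Qed.

Lemma euclidean_triangle_exists (a b c : R) :
  0 <= a -> 0 <= b -> 0 <= c -> a <= b + c -> b <= a + c -> c <= a + b ->
  exists P Q Rr, m_distE P Q = a /\ m_distE Q Rr = b /\ m_distE Rr P = c.
Proof.
  intros ha hb hc t1 t2 t3.
  destruct (Req_dec a 0) as [a0 | a0].
  - subst a. replace c with b by lra.
    exists (0, 0), (0, 0), (b, 0). unfold m_distE; cbn [fst snd].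
    repeat split; [replace ((0 - 0) ^ 2 + (0 - 0) ^ 2) with (0 ^ 2) by ring
                  | replace ((0 - b) ^ 2 + (0 - 0) ^ 2) with (b ^ 2) by ring
                  | replace ((b - 0) ^ 2 + (0 - 0) ^ 2) with (b ^ 2) by ring];
      apply sqrt_pow2; lra.
  - (* Put P = (0,0), Q = (a,0); Rr = (x0, y0) is fixed by the law of cosines. *)
    set (x0 := (a ^ 2 + c ^ 2 - b ^ 2) / (2 * a)).
    assert (hx : x0 * (2 * a) = a ^ 2 + c ^ 2 - b ^ 2) by (unfold x0; field; lra).
    assert (hy : 0 <= c ^ 2 - x0 ^ 2).
    { assert (heron : 0 <= (b - a + c) * (b + a - c) * ((a + c - b) * (a + c + b)))
        by (apply Rmult_le_pos; apply Rmult_le_pos; lra).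
      apply (Rmult_le_reg_l (4 * a ^ 2)); [nra |].
      replace (4 * a ^ 2 * (c ^ 2 - x0 ^ 2)) with
        ((b - a + c) * (b + a - c) * ((a + c - b) * (a + c + b))); [lra |].
      replace (x0 ^ 2) with ((x0 * (2 * a)) ^ 2 / (4 * a ^ 2)) by (field; lra).
      rewrite hx. field. lra. }
    set (y0 := sqrt (c ^ 2 - x0 ^ 2)).
    assert (hy0 : y0 ^ 2 = c ^ 2 - x0 ^ 2) by (apply pow2_sqrt; exact hy).
    exists (0, 0), (a, 0), (x0, y0). unfold m_distE; cbn [fst snd].
    repeat split; [replace ((0 - a) ^ 2 + (0 - 0) ^ 2) with (a ^ 2) by ring
                  | replace ((a - x0) ^ 2 + (0 - y0) ^ 2) with (b ^ 2) by nra
                  | replace ((x0 - 0) ^ 2 + (y0 - 0) ^ 2) with (c ^ 2) by nra];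
      apply sqrt_pow2; lra.
Qed.

Lemma side_point_start {X : Type} (g : R -> X) (l : R) (P Q : R * R) :
  0 <= l -> m_side_point g l P Q (g 0) P.
Proof.
  intros hl. exists 0. split; [lra | split; [reflexivity |]].
  destruct P as [p1 p2]. unfold m_lerp, Rdiv; cbn [fst snd]. f_equal; ring.
Qed.

Lemma side_point_lerp {X : Type} (g : R -> X) (l : R) (P Q : R * R) (u : R) :
  0 <= u <= 1 -> 0 <= l -> m_distE P Q = l ->
  m_side_point g l P Q (g (u * l)) (m_lerp P Q u).
Proof.
  intros hu hl hPQ. exists (u * l). split; [nra | split; [reflexivity |]].
  destruct (Req_dec l 0) as [l0 | l0].
  - (* a degenerate side: P = Q, and the junk value u*0/0 = 0 is harmless *)
    rewrite l0 in hPQ. rewrite <- (distE_eq0 P Q hPQ).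
    destruct P as [p1 p2]. unfold m_lerp; cbn [fst snd]. f_equal; ring.
  - f_equal. field. exact l0.
Qed.

Section CAT0.

Variables (X : Type) (d : X -> X -> R).
Hypothesis metric_d : m_is_metric d.
Hypothesis geodesic_d : m_geodesic_space d.
Hypothesis cat0_d : m_cat0_ineq d.

Lemma dist_ge0 x y : 0 <= d x y.
Proof. apply metric_d. Qed.

Lemma dist_sym x y : d x y = d y x.
Proof. apply metric_d. Qed.

Lemma dist_triangle x y z : d x z <= d x y + d y z.
Proof. apply metric_d. Qed.

Lemma comparison_triangle_exists p q r :
  exists P Q Rr, m_distE P Q = d p q /\ m_distE Q Rr = d q r /\ m_distE Rr P = d r p.
Proof.
  pose proof (dist_triangle p r q). pose proof (dist_triangle q p r).
  pose proof (dist_triangle r q p).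
  rewrite (dist_sym r q), (dist_sym p r), (dist_sym q p) in *.
  apply euclidean_triangle_exists; try apply dist_ge0; lra.
Qed.

Lemma cat0_dist_sq_lerp p q r g u :
  m_geodesic_from_to d g p q -> 0 <= u <= 1 ->
  d r (g (u * d p q)) ^ 2 <= (1 - u) * d r p ^ 2 + u * d q r ^ 2 - u * (1 - u) * d p q ^ 2.
Proof.
  intros Hg hu.
  destruct (geodesic_d q r) as [g2 Hg2]. destruct (geodesic_d r p) as [g3 Hg3].
  destruct (comparison_triangle_exists p q r) as (P & Q & Rr & ePQ & eQR & eRP).
  set (m := g (u * d p q)).
  pose proof (cat0_d p q r g g2 g3 P Q Rr Hg Hg2 Hg3 ePQ eQR eRP (g3 0) Rr m (m_lerp P Q u)
    (or_intror (or_intror (side_point_start g3 _ Rr P (dist_ge0 r p))))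
    (or_introl (side_point_lerp g _ P Q u hu (dist_ge0 p q) ePQ))) as hle.
  rewrite (proj1 (proj2 Hg3)) in hle.
  assert (hsq : d r m ^ 2 <= m_distE Rr (m_lerp P Q u) ^ 2)
    by (apply pow_incr; split; [apply dist_ge0 | exact hle]).
  rewrite <- ePQ, <- eQR, <- eRP, !distE_sq.
  rewrite distE_sq in hsq. unfold m_lerp in hsq. cbn [fst snd] in hsq.
  eapply Rle_trans; [exact hsq |]. right. ring.
Qed.

Lemma cat0_dist_lerp_lerp p q r g1 g3 u :
  m_geodesic_from_to d g1 p q -> m_geodesic_from_to d g3 r p -> 0 <= u <= 1 ->
  d (g1 (u * d p q)) (g3 ((1 - u) * d r p)) <= u * d q r.
Proof.
  intros Hg1 Hg3 hu.
  destruct (geodesic_d q r) as [g2 Hg2].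
  destruct (comparison_triangle_exists p q r) as (P & Q & Rr & ePQ & eQR & eRP).
  pose proof (cat0_d p q r g1 g2 g3 P Q Rr Hg1 Hg2 Hg3 ePQ eQR eRP
    (g1 (u * d p q)) (m_lerp P Q u) (g3 ((1 - u) * d r p)) (m_lerp Rr P (1 - u))
    (or_introl (side_point_lerp g1 _ P Q u hu (dist_ge0 p q) ePQ))
    (or_intror (or_intror
      (side_point_lerp g3 _ Rr P (1 - u) ltac:(lra) (dist_ge0 r p) eRP)))) as hle.
  rewrite distE_lerp_lerp, eQR in hle by lra. exact hle.
Qed.

Lemma convex_geodesic_lerp (S : X -> Prop) x y g u :
  m_convex_set d S -> S x -> S y -> m_geodesic_from_to d g x y -> 0 <= u <= 1 ->
  S (g (u * d x y)).
Proof.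
  intros HS Hx Hy Hg hu. apply (HS x y g Hx Hy Hg).
  pose proof (dist_ge0 x y). nra.
Qed.

(* The angle at a nearest point q of S to q' is at least a right angle. *)
Lemma nearest_point_pythagoras (S : X -> Prop) (D : R) p q q' :
  m_convex_set d S -> (forall s, S s -> D <= d q' s) ->
  S p -> S q -> d q q' = D ->
  d p q ^ 2 + D ^ 2 <= d p q' ^ 2.
Proof.
  intros HS Hnear Hp Hq HD.
  assert (D0 : 0 <= D) by (rewrite <- HD; apply dist_ge0).
  destruct (geodesic_d q p) as [g Hg].
  rewrite (dist_sym p q).
  apply (Rle_of_forall_le_plus_scaled _ _ (d q p ^ 2)). intros u hu.
  pose proof (cat0_dist_sq_lerp q p q' g u Hg ltac:(lra)) as hcn.
  pose proof (Hnear _ (convex_geodesic_lerp S q p g u HS Hq Hp Hg ltac:(lra))) as hDm.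
  rewrite (dist_sym q' q), HD in hcn.
  assert (hDm2 : D ^ 2 <= d q' (g (u * d q p)) ^ 2) by (apply pow_incr; lra).
  set (L := d q p) in *. set (F := d p q') in *.
  assert (h : u * (D ^ 2 + L ^ 2 - F ^ 2 - u * L ^ 2) <= 0) by nra.
  assert (h' : D ^ 2 + L ^ 2 - F ^ 2 - u * L ^ 2 <= 0) by nra.
  lra.
Qed.

(* On [x',y] at fraction u from x', the point stays within u*D of S' (compare
   with [x',y'] in S'), hence at distance >= (1-u)*D from x; the CN inequality
   for x then gives the bound as u tends to 0. *)
Lemma nearest_point_dist_sq_le (S' : X -> Prop) (D : R) x y x' y' :
  m_convex_set d S' -> (forall s', S' s' -> D <= d x s') ->
  S' x' -> S' y' -> d x x' = D -> d y y' <= D ->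
  d x' y ^ 2 <= d x y ^ 2 + D ^ 2.
Proof.
  intros HS' Hnear Hx' Hy' HDx HDy.
  assert (D0 : 0 <= D) by (rewrite <- HDx; apply dist_ge0).
  destruct (geodesic_d x' y) as [g1 Hg1]. destruct (geodesic_d y' x') as [g3 Hg3].
  rewrite (dist_sym x y).
  apply (Rle_of_forall_le_plus_scaled _ _ (d x' y ^ 2 - D ^ 2)). intros u hu.
  pose proof (cat0_dist_lerp_lerp x' y y' g1 g3 u Hg1 Hg3 ltac:(lra)) as hmid.
  pose proof (cat0_dist_sq_lerp x' y x g1 u Hg1 ltac:(lra)) as hcn.
  rewrite HDx in hcn.
  pose proof (convex_geodesic_lerp S' y' x' g3 (1 - u) HS' Hy' Hx' Hg3 ltac:(lra)) as hin.
  pose proof (Hnear _ hin) as hsep.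
  pose proof (dist_triangle x (g1 (u * d x' y)) (g3 ((1 - u) * d y' x'))) as htri.
  assert (hm : (1 - u) * D <= d x (g1 (u * d x' y))) by nra.
  assert (hm2 : ((1 - u) * D) ^ 2 <= d x (g1 (u * d x' y)) ^ 2) by (apply pow_incr; nra).
  set (E := d x' y) in *. set (L := d y x) in *.
  assert (h : u * ((1 - u) * E ^ 2 - (1 - u) * D ^ 2 - L ^ 2) <= 0) by nra.
  assert (h' : (1 - u) * E ^ 2 - (1 - u) * D ^ 2 - L ^ 2 <= 0) by nra.
  lra.
Qed.

Lemma cyclic_nonexpansive_on_side (S S' : X -> Prop) (T : X -> X) (D : R) :
  m_convex_set d S' ->
  (forall s s', S s -> S' s' -> D <= d s s') ->
  (forall s, S s -> exists s', S' s' /\ d s s' = D) ->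
  (forall s, S s -> S' (T s)) -> (forall s', S' s' -> S (T s')) ->
  (forall s s', S s -> S' s' -> d (T s) (T s') <= d s s') ->
  forall x y, S x -> S y -> d (T x) (T y) <= d x y.
Proof.
  intros HS' Hsep Hnear TSS' TS'S Hne x y Hx Hy.
  destruct (Hnear y Hy) as (y' & Hy' & ey).
  destruct (Hnear x Hx) as (x' & Hx' & ex).
  assert (eT : d (T y) (T y') = D).
  { apply Rle_antisym; [rewrite <- ey; exact (Hne y y' Hy Hy') |].
    rewrite dist_sym. apply Hsep; auto. }
  pose proof (nearest_point_pythagoras S' D (T x) (T y) (T y') HS'
    (fun s Hs => Hsep _ s (TS'S _ Hy') Hs) (TSS' _ Hx) (TSS' _ Hy) eT) as hpyth.
  pose proof (Hne x y' Hx Hy') as hne.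
  pose proof (nearest_point_dist_sq_le S' D y x y' x' HS' (fun s' => Hsep y s' Hy) Hy' Hx' ey
    (Req_le _ _ ex)) as hcross.
  rewrite (dist_sym y' x), (dist_sym y x) in hcross.
  assert (hne2 : d (T x) (T y') ^ 2 <= d x y' ^ 2)
    by (apply pow_incr; split; [apply dist_ge0 | exact hne]).
  apply Rle_of_sq_le; [apply dist_ge0 | nra].
Qed.

End CAT0.

Lemma dist_sets_le {X : Type} (d : X -> X -> R) (A B : X -> Prop) (D : R) a b :
  m_dist_sets d A B = Finite D -> A a -> B b -> D <= d a b.
Proof.
  intros HD Ha Hb.
  pose proof (proj1 (Glb_Rbar_correct (fun r => exists a b, A a /\ B b /\ r = d a b)) (d a b)
    (ex_intro _ a (ex_intro _ b (conj Ha (conj Hb eq_refl))))) as h.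
  unfold m_dist_sets in HD. rewrite HD in h. exact h.
Qed.

Theorem mainTheorem11 (X : Type) (d : X -> X -> R) (A B : X -> Prop) (T : X -> X) :
  complete_CAT0 d ->
  m_nonempty A -> m_nonempty B ->
  m_closed_set d A -> m_closed_set d B ->
  m_convex_set d A -> m_convex_set d B ->
  m_bounded_set d A -> m_bounded_set d B ->
  proximal d A B ->
  (forall x, m_union_set A B x -> m_union_set A B (T x)) ->
  cyclic_map A B T ->
  rel_nonexpansive d A B T ->
  forall x y, m_union_set A B x -> m_union_set A B y -> d (T x) (T y) <= d x y.
Proof.
  intros [Hm [Hg [Hc _]]] [a0 Ha0] [b0 Hb0] _ _ HcA HcB _ _ Hprox _ [TAB TBA] Hne.
  destruct (Hprox a0 b0 Ha0 Hb0) as (_ & b1 & _ & _ & e1 & _).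
  set (D := d a0 b1).
  assert (HD : m_dist_sets d A B = Finite D) by (rewrite <- e1; reflexivity).
  assert (nearA : forall a, A a -> exists b, B b /\ d a b = D).
  { intros a Ha. destruct (Hprox a b0 Ha Hb0) as (_ & b & _ & Hb & e & _).
    exists b. split; [exact Hb |]. rewrite HD in e. injection e; auto. }
  assert (nearB : forall b, B b -> exists a, A a /\ d b a = D).
  { intros b Hb. destruct (Hprox a0 b Ha0 Hb) as (a & _ & Ha & _ & _ & e).
    exists a. split; [exact Ha |]. rewrite HD in e. injection e.
    rewrite (dist_sym X d Hm); auto. }
  pose proof (fun a b => dist_sets_le d A B D a b HD) as sepAB.
  assert (sepBA : forall b a, B b -> A a -> D <= d b a)
    by (intros b a Hb Ha; rewrite (dist_sym X d Hm); auto).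
  intros x y [Hx | Hx] [Hy | Hy].
  - exact (cyclic_nonexpansive_on_side X d Hm Hg Hc A B T D HcB sepAB nearA TAB TBA Hne
      x y Hx Hy).
  - exact (Hne x y Hx Hy).
  - rewrite (dist_sym X d Hm (T x)), (dist_sym X d Hm x). exact (Hne y x Hy Hx).
  - refine (cyclic_nonexpansive_on_side X d Hm Hg Hc B A T D HcA sepBA nearB TBA TAB _
      x y Hx Hy).
    intros b a Hb Ha. rewrite (dist_sym X d Hm (T b)), (dist_sym X d Hm b).
    exact (Hne a b Ha Hb).
Qed.
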